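(* Let $n,m\ge1$, $t\ge1$, $\mathbf y\in\{0,1\}^n$ fixed training labels with $l^\star=\sum_iy_i$, $\Psi\in\mathbb R^{m\times n}$, thresholds $\tau_1,\dots,\tau_t\in\mathbb R$, and metrics $\mathrm{metric}^{(0)},\dots,\mathrm{metric}^{(t)}$, each of the form $$\mathrm{metric}^{(i)}(\hat{\mathbf y},\check{\mathbf y})=\sum_{j}\frac{a^{(i)}_j\mathrm{TP}+b^{(i)}_j\mathrm{TN}+f^{(i)}_j(\mathrm{PP},\mathrm{AP})}{g^{(i)}_j(\mathrm{PP},\mathrm{AP})}.$$ Then $$\max_{\theta\in\mathbb R^m}\ \min_{\mathcal Q}\ \max_{\mathcal P:\ \mathbb E_{\hat{\mathbf Y}\sim\mathcal P}[\mathrm{metric}^{(i)}(\hat{\mathbf Y},\mathbf y)]\ge\tau_i\ \forall i\in[1,t]}\ \mathbb E_{\hat{\mathbf Y}\sim\mathcal P,\check{\mathbf Y}\sim\mathcal Q}\Big[\mathrm{metric}^{(0)}(\hat{\mathbf Y},\check{\mathbf Y})-\theta^\top(\Psi\check{\mathbf Y}-\Psi\mathbf y)\Big]$$ ($\mathcal P,\mathcal Q$ probability distributions on $\{0,1\}^n$, $\hat{\mathbf Y},\check{\mathbf Y}$ independent) equals $$\max_{\theta}\Big\{\min_{\mathbf Q\in\Delta}\max_{\mathbf P\in\Delta\cap\Gamma}\Big[\sum_{k,l=0}^n\sum_j\frac{1}{g^{(0)}_j(k,l)}\Big\{a^{(0)}_j[\mathbf p_k^1\cdot\mathbf q_l^1]+b^{(0)}_j[\mathbf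 p_k^0\cdot\mathbf q_l^0]+f^{(0)}_j(k,l)r_ks_l\Big\}-\langle\mathbf Q^\top\mathbf 1,\Psi^\top\theta\rangle\Big]+\langle\mathbf y,\Psi^\top\theta\rangle\Big\},$$ where $$\Gamma=\Big\{\mathbf P:\ \sum_{k=0}^n\sum_j\frac{1}{g^{(i)}_j(k,l^\star)}\Big\{a^{(i)}_j[\mathbf p_k^1\cdot\mathbf y]+b^{(i)}_j[\mathbf p_k^0\cdot(\mathbf 1-\mathbf y)]+f^{(i)}_j(k,l^\star)r_k\Big\}\ge\tau_i\ \ \forall i\in[1,t]\Big\}.$$
   Context: For $\hat{\mathbf y},\check{\mathbf y}\in\{0,1\}^n$: $\mathrm{TP}=\sum\hat y_i\check y_i$, $\mathrm{TN}=\sum(1-\hat y_i)(1-\check y_i)$, $\mathrm{PP}=\sum\hat y_i$, $\mathrm{AP}=\sum\check y_i$; $a_j^{(i)},b_j^{(i)}\in\mathbb R$, $f_j^{(i)},g_j^{(i)}:\{0,\dots,n\}^2\to\mathbb R$ with $g_j^{(i)}$ never zero. The $i$-th column of $\Psi$ is the feature $\phi(x_i,1)\in\mathbb R^m$ of sample $i$ (with $\phi(x_i,0)=0$), so the feature of a label vector $\mathbf y$ is $\Psi\mathbf y$. $\Delta=\{\mathbf P\in\mathbb R^{n\times n}: p_{i,k}\ge0;\ p_{i,k}\le\frac1k\sum_jp_{j,k}\ \forall i,k\in[1,n];\ \sum_k\frac1k\sum_ip_{i,k}\le1\}$. From $\mathbf P$: $\mathbf p_k^1=\mathbf P_{(:,k)}$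 ($k\ge1$), $\mathbf p_0^1=\mathbf 0$; $r_k=\frac1k\mathbf 1^\top\mathbf p_k^1$ ($k\ge1$), $r_0=1-\sum_{k\ge1}r_k$; $\mathbf p_k^0=r_k\mathbf 1-\mathbf p_k^1$; likewise $\mathbf q_l^1,\mathbf q_l^0,s_l$ from $\mathbf Q$. *)

From HB Require Import structures.
From mathcomp Require Import all_boot all_order all_algebra.
From mathcomp Require Import classical_sets reals constructive_ereal ereal.
Set Implicit Arguments. Unset Strict Implicit. Unset Printing Implicit Defensive.
Import Order.TTheory GRing.Theory Num.Theory.
Local Open Scope ring_scope.

Definition lab (n : nat) := {ffun 'I_n -> bool}.

Section Defs.
Variable R : realType.
Variable n : nat.

Definition TP (yh yc : lab n) : nat := \sum_(i < n) ((yh i && yc i) : nat).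
Definition TN (yh yc : lab n) : nat := \sum_(i < n) ((~~ yh i && ~~ yc i) : nat).
Definition PP (yh : lab n) : nat := \sum_(i < n) (yh i : nat).
Definition AP (yc : lab n) : nat := \sum_(i < n) (yc i : nat).

Record fmetric := FMetric {
  mJ : nat;
  ma : 'I_mJ -> R;
  mb : 'I_mJ -> R;
  mf : 'I_mJ -> nat -> nat -> R;
  mg : 'I_mJ -> nat -> nat -> R }.
Arguments ma : clear implicits. Arguments mb : clear implicits.
Arguments mf : clear implicits. Arguments mg : clear implicits.

Definition metric_val (M : fmetric) (yh yc : lab n) : R :=
  \sum_(j < mJ M)
     (ma M j * (TP yh yc)%:R + mb M j * (TN yh yc)%:R + mf M j (PP yh) (AP yc))
       / mg M j (PP yh) (AP yc).

Definition g_nonzero (M : fmetric) : Prop :=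
  forall j k l, (k <= n)%N -> (l <= n)%N -> mg M j k l != 0.

Definition is_dist (D : lab n -> R) : Prop :=
  (forall y, 0 <= D y) /\ \sum_(y : lab n) D y = 1.

Definition yvec (y : lab n) : 'cV[R]_n := \col_i (y i)%:R.

Definition game_obj (m : nat) (Psi : 'M[R]_(m, n)) (theta : 'cV[R]_m)
    (y : lab n) (M0 : fmetric) (P Q : lab n -> R) : R :=
  \sum_(yh : lab n) \sum_(yc : lab n) P yh * Q yc *
    (metric_val M0 yh yc - (theta^T *m (Psi *m (yvec yc - yvec y))) 0 0).

Definition exp_metric (M : fmetric) (P : lab n -> R) (y : lab n) : R :=
  \sum_(yh : lab n) P yh * metric_val M yh y.

(* the polytope Delta; column c : 'I_n of P stands for k = c+1 *)
Definition inDelta (P : 'M[R]_n) : Prop :=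
  (forall i k, 0 <= P i k) /\
  (forall i k : 'I_n, P i k <= (k.+1%:R)^-1 * \sum_(j < n) P j k) /\
  \sum_(k < n) (k.+1%:R)^-1 * \sum_(i < n) P i k <= 1.

(* p_k^1 = P_(:,k) for 1 <= k <= n, p_0^1 = 0 *)
Definition pcol1 (P : 'M[R]_n) (k : nat) (i : 'I_n) : R :=
  if k is k'.+1 then oapp (fun c : 'I_n => P i c) 0 (insub k') else 0.

Definition rk (P : 'M[R]_n) (k : nat) : R :=
  if k is k'.+1 then (k%:R)^-1 * \sum_(i < n) pcol1 P k i
  else 1 - \sum_(c < n) (c.+1%:R)^-1 * \sum_(i < n) P i c.

Definition pcol0 (P : 'M[R]_n) (k : nat) (i : 'I_n) : R := rk P k - pcol1 P k i.

Definition dotv (u v : 'I_n -> R) : R := \sum_(i < n) u i * v i.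

Definition yreal (y : lab n) (i : 'I_n) : R := (y i)%:R.

Definition lstar (y : lab n) : nat := \sum_(i < n) (y i : nat).

Definition marg_obj (m : nat) (Psi : 'M[R]_(m, n)) (theta : 'cV[R]_m)
    (M0 : fmetric) (P Q : 'M[R]_n) : R :=
  \sum_(k < n.+1) \sum_(l < n.+1) \sum_(j < mJ M0)
     (mg M0 j k l)^-1 *
       (ma M0 j * dotv (pcol1 P k) (pcol1 Q l)
        + mb M0 j * dotv (pcol0 P k) (pcol0 Q l)
        + mf M0 j k l * rk P k * rk Q l)
  - dotv (fun i => \sum_(c < n) Q i c) (fun i => (Psi^T *m theta) i 0).

Definition lin_y (m : nat) (Psi : 'M[R]_(m, n)) (theta : 'cV[R]_m) (y : lab n) : R :=
  dotv (yreal y) (fun i => (Psi^T *m theta) i 0).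

Definition inGamma (t : nat) (Mc : 'I_t -> fmetric) (tau : 'I_t -> R)
    (y : lab n) (P : 'M[R]_n) : Prop :=
  forall i : 'I_t,
    tau i <= \sum_(k < n.+1) \sum_(j < mJ (Mc i))
      (mg (Mc i) j k (lstar y))^-1 *
        (ma (Mc i) j * dotv (pcol1 P k) (yreal y)
         + mb (Mc i) j * dotv (pcol0 P k) (fun i => 1 - yreal y i)
         + mf (Mc i) j k (lstar y) * rk P k).

End Defs.

(* Both sides depend on a distribution D on {0,1}^n only through its level
   marginals r_k = Pr[PP = k] and p_k^1 = E[Y; PP = k]: once PP and AP are fixed,
   each metric is affine in TP and TN, which are bilinear in the label vectors.
   Hence the game objective is [marg_obj] of the marginals plus <y, Psi^T theta>,
   and the constraints on P say that its marginals lie in Gamma.  The marginal map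
   is onto Delta: after scaling, a column p_k is a point of the hypersimplex
   {x in [0,1]^n | sum x = k}, which is the convex hull of the 0/1 vectors with k
   ones (move mass between two fractional coordinates until none is left).  So the
   inner infimum and supremum range over the same sets of values. *)

From mathcomp Require Import all_boot all_order all_algebra.
From mathcomp Require Import boolp classical_sets reals constructive_ereal ereal.
From mathcomp Require Import ring lra zify.
Set Implicit Arguments. Unset Strict Implicit. Unset Printing Implicit Defensive.
Import Order.TTheory GRing.Theory Num.Theory.
Local Open Scope classical_set_scope.
Local Open Scope ring_scope.

Section ErealShift.
Variable R : realType.
Implicit Types (S : set \bar R) (c : R).
Local Open Scope ereal_scope.

Lemma ereal_supDr S c : ereal_sup [set x + c%:E | x in S] = ereal_sup S + c%:E.
Proof.
apply/eqP; rewrite eq_le; apply/andP; split.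
  by apply/ereal_supP => _ [x Sx <-]; rewrite leeD2rE //; exact: ereal_sup_ubound.
rewrite -leeBrDr //; apply/ereal_supP => x Sx; rewrite leeBrDr //.
by apply: ereal_sup_ubound; exists x.
Qed.

Lemma ereal_infDr S c : ereal_inf [set x + c%:E | x in S] = ereal_inf S + c%:E.
Proof.
apply/eqP; rewrite eq_le; apply/andP; split; last first.
  by apply: le_ereal_inf_tmp => _ [x Sx <-]; rewrite leeD2rE //; exact: ereal_inf_lbound.
rewrite -leeBlDr //; apply: le_ereal_inf_tmp => x Sx; rewrite leeBlDr //.
by apply: ereal_inf_lbound; exists x.
Qed.
End ErealShift.

Section Hypersimplex.
Variables (R : realFieldType) (n : nat).
Implicit Types (k : nat) (x : 'I_n -> R) (F G : lab n -> R) (z : lab n).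

Definition level_comb k F x := [/\ forall z, 0 <= F z,
  forall z, F z != 0 -> PP z = k & forall i, \sum_z F z * (z i)%:R = x i].

Definition in_cube x := forall i, 0 <= x i <= 1.

Definition frac_coords x : {set 'I_n} := [set i | 0 < x i < 1].

Lemma natr_PP z : (PP z)%:R = \sum_i (z i)%:R :> R.
Proof. by rewrite /PP natr_sum. Qed.

Lemma level_comb_point z x : (forall i, x i = (z i)%:R) ->
  level_comb (PP z) (fun z' => (z' == z)%:R) x.
Proof.
move=> xE; split=> [z'|z'|i]; first exact: ler0n.
  by have [->|] := eqVneq z' z; rewrite ?eqxx.
rewrite xE (bigD1 z) //= eqxx mul1r big1 ?addr0 // => z' /negbTE ->.
by rewrite mul0r.
Qed.

Lemma level_combD k F G x x' : level_comb k F x -> level_comb k G x' ->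
  level_comb k (fun z => F z + G z) (fun i => x i + x' i).
Proof.
case=> F0 Fk Fx [G0 Gk Gx]; split=> [z|z|i]; first exact: addr_ge0.
  by have [FE|/Fk//] := eqVneq (F z) 0; rewrite FE add0r => /Gk.
by rewrite -Fx -Gx -big_split; apply: eq_bigr => z _; rewrite mulrDl.
Qed.

Lemma level_combZ k r F x : 0 <= r -> level_comb k F x ->
  level_comb k (fun z => r * F z) (fun i => r * x i).
Proof.
move=> r0 [F0 Fk Fx]; split=> [z|z|i]; first exact: mulr_ge0.
  by rewrite mulf_eq0 negb_or => /andP[_ /Fk].
by rewrite -Fx mulr_sumr; apply: eq_bigr => z _; rewrite mulrA.
Qed.

Lemma level_comb_mass k F x : level_comb k F x -> \sum_i x i = k%:R * \sum_z F z.
Proof.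
case=> _ Fk Fx; under eq_bigr do rewrite -Fx.
rewrite exchange_big mulr_sumr; apply: eq_bigr => z _.
have [->|/Fk <-] := eqVneq (F z) 0.
  by rewrite big1 ?mulr0 // => i _; rewrite mul0r.
by rewrite -mulr_sumr natr_PP mulrC.
Qed.

Lemma level_comb_off k F x z : level_comb k F x -> PP z != k -> F z = 0.
Proof. by case=> _ Fk _; apply: contraNeq => /Fk ->. Qed.

Lemma cube_coordE (a : R) : 0 <= a <= 1 -> ~~ (0 < a < 1) -> a = (a == 1)%:R.
Proof.
move=> /andP[a0 a1]; have [->//|a_neq1] := eqVneq a 1.
have a_lt1 : a < 1 by rewrite lt_neqAle a_neq1 a1.
by rewrite a_lt1 andbT -leNgt => a_le0; apply/le_anti; rewrite a_le0 a0.
Qed.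

Lemma integral_level_comb k x : in_cube x -> #|frac_coords x| = 0%N ->
  \sum_i x i = k%:R -> exists F, level_comb k F x.
Proof.
move=> x01 /card0_eq x_int xk; pose z : lab n := [ffun i => x i == 1].
have xE i : x i = (z i)%:R.
  by rewrite ffunE; apply: cube_coordE => //; move: (x_int i); rewrite !inE => ->.
have zk : PP z = k.
  by apply/eqP; rewrite -(eqr_nat R) natr_PP -xk; apply/eqP/eq_bigr => i _.
by exists (fun z' => (z' == z)%:R); rewrite -zk; apply: level_comb_point.
Qed.

Lemma frac_coords_pair k x i : in_cube x -> \sum_l x l = k%:R ->
  i \in frac_coords x -> exists2 j, j != i & j \in frac_coords x.
Proof.
move=> x01 xk fi.
have [j /andP[ji fj]|no_j] := pickP (fun j => (j != i) && (j \in frac_coords x)).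
  by exists j.
have xjE j : j != i -> x j = (x j == 1)%:R.
  by move=> ji; apply: cube_coordE => //; move: (no_j j); rewrite ji inE /= => ->.
pose c := (\sum_(j | j != i) (x j == 1%R : nat))%N.
have xi_eq : x i + c%:R = k%:R.
  rewrite -xk (bigD1 i) //= natr_sum; congr (_ + _).
  by apply: eq_bigr => j ji; rewrite -xjE.
move: fi; rewrite inE => /andP[xi0 xi1].
have : (c < k)%N by rewrite -(ltr_nat R) -xi_eq ltrDr.
have : (k < c.+1)%N by rewrite -(ltr_nat R) -xi_eq -addn1 natrD addrC ltrD2l.
lia.
Qed.

Definition pivot x i j d : 'I_n -> R :=
  fun l => x l + (if l == i then d else 0) - (if l == j then d else 0).

Lemma sum_pivot x i j d : \sum_l pivot x i j d l = \sum_l x l.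
Proof. by rewrite sumrB big_split /= -!big_mkcond !big_pred1_eq addrK. Qed.

Lemma pivot_reduces x i j : in_cube x -> i != j ->
  i \in frac_coords x -> j \in frac_coords x ->
  exists2 d, 0 < d & in_cube (pivot x i j d) /\
    (#|frac_coords (pivot x i j d)| < #|frac_coords x|)%N.
Proof.
move=> x01 ij fi fj.
move: (fi) (fj); rewrite !inE => /andP[xi0 xi1] /andP[xj0 xj1].
pose d := Num.min (1 - x i) (x j).
have d_gt0 : 0 < d by rewrite lt_min subr_gt0 xi1 xj0.
have d_le_i : d <= 1 - x i by rewrite ge_min lexx.
have d_le_j : d <= x j by rewrite ge_min lexx orbT.
have piv_i : pivot x i j d i = x i + d by rewrite /pivot eqxx (negbTE ij) subr0.
have piv_j : pivot x i j d j = x j - d by rewrite /pivot eqxx eq_sym (negbTE ij) addr0.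
have piv_l l : l != i -> l != j -> pivot x i j d l = x l.
  by move=> /negbTE li /negbTE lj; rewrite /pivot li lj addr0 subr0.
exists d => //; split.
  move=> l; have [->|li] := eqVneq l i; first by rewrite piv_i; lra.
  have [->|lj] := eqVneq l j; first by rewrite piv_j; lra.
  by rewrite piv_l.
apply/proper_card/fintype.properP; split.
  apply/fintype.subsetP => l; have [->|li] := eqVneq l i; first by [].
  have [->|lj] := eqVneq l j; first by [].
  by rewrite !inE piv_l.
have [d_i|d_j] : d = 1 - x i \/ d = x j.
  by rewrite /d minEle; case: leP; [left|right].
  by exists i; rewrite // inE piv_i d_i addrC subrK ltxx andbF.
by exists j; rewrite // inE piv_j d_j subrr ltxx.
Qed.

Lemma pivot_mix x i j dp dm l : i != j -> 0 < dp -> 0 < dm ->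
  x l = dm / (dp + dm) * pivot x i j dp l + (1 - dm / (dp + dm)) * pivot x j i dm l.
Proof.
move=> ij dp0 dm0; have dpm : dp + dm != 0 by rewrite gt_eqF // addr_gt0.
rewrite /pivot; have [->|li] := eqVneq l i.
  by rewrite (negbTE ij); field.
by case: eqP => _; field.
Qed.

Theorem hypersimplex_level_comb k x : in_cube x -> \sum_i x i = k%:R ->
  exists F, level_comb k F x.
Proof.
have [N] := ubnP #|frac_coords x|; elim: N x => // N IH x fracN x01 xk.
have [/integral_level_comb|/card_gt0P[i fi]] := posnP #|frac_coords x|; first exact.
have [j ji fj] := frac_coords_pair x01 xk fi.
have ij : i != j by rewrite eq_sym.
have [dp dp0 [cube_p card_p]] := pivot_reduces x01 ij fi fj.
have [dm dm0 [cube_m card_m]] := pivot_reduces x01 ji fj fi.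
have [Fp Fp_x] := IH _ (leq_trans card_p fracN) cube_p (etrans (sum_pivot _ _ _ _) xk).
have [Fm Fm_x] := IH _ (leq_trans card_m fracN) cube_m (etrans (sum_pivot _ _ _ _) xk).
pose a := dm / (dp + dm).
have a_ge0 : 0 <= a by rewrite divr_ge0 ?addr_ge0 ?ltW.
have a_le1 : 0 <= 1 - a.
  by rewrite subr_ge0 /a ler_pdivrMr ?addr_gt0 // mul1r lerDr ltW.
exists (fun z => a * Fp z + (1 - a) * Fm z).
have [F0 Fk Fx] := level_combD (level_combZ a_ge0 Fp_x) (level_combZ a_le1 Fm_x).
by split=> // i'; rewrite Fx -pivot_mix.
Qed.

Lemma column_level_comb k p : (0 < k)%N -> (forall i, 0 <= p i) ->
  (forall i, p i <= k%:R^-1 * \sum_j p j) -> exists F, level_comb k F p.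
Proof.
move=> k_gt0 p0 p_le; pose r := k%:R^-1 * \sum_j p j.
have r_ge0 : 0 <= r by rewrite mulr_ge0 ?invr_ge0 ?ler0n ?sumr_ge0.
have [r0|r_neq0] := eqVneq r 0.
  exists (fun _ => 0); split=> // [z|i]; first by rewrite eqxx.
  by rewrite big1 => [|z _]; rewrite ?mul0r //; apply/le_anti; rewrite p0 -r0 p_le.
have r_gt0 : 0 < r by rewrite lt_def r_neq0.
have sum_p : \sum_j p j != 0.
  by apply: contraNneq r_neq0; rewrite /r => ->; rewrite mulr0.
have x01 : in_cube (fun i => p i / r).
  by move=> i /=; rewrite divr_ge0 ?p0 ?(ltW r_gt0) //= ler_pdivrMr // mul1r p_le.
have [F Fx] : exists F, level_comb k F (fun i => p i / r).
  apply: hypersimplex_level_comb x01 _.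
  by rewrite -mulr_suml /r invfM invrK mulrCA mulfV ?mulr1.
exists (fun z => r * F z); have [F0 Fk Frx] := level_combZ r_ge0 Fx.
by split=> // i; rewrite Frx mulrC divfK.
Qed.
End Hypersimplex.

Section Marginals.
Variables (R : realType) (n : nat).
Implicit Types (D P Q : lab n -> R) (z yh yc : lab n).

Definition level_prob D k : R := \sum_(z | PP z == k) D z.
Definition level_pos D k i : R := \sum_(z | PP z == k) D z * yreal R z i.
Definition level_neg D k i : R := \sum_(z | PP z == k) D z * (1 - yreal R z i).
Definition marginals D : 'M[R]_n := \matrix_(i, c) level_pos D c.+1 i.

Lemma PP_le z : (PP z <= n)%N.
Proof.
by rewrite -[leqRHS]card_ord -sum1_card; apply: leq_sum => i _; case: (z i).
Qed.

Lemma sum_by_level (F : lab n -> R) :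
  \sum_z F z = \sum_(k < n.+1) \sum_(z | PP z == k) F z.
Proof.
rewrite (partition_big (fun z => inord (PP z) : 'I_n.+1) xpredT) //.
apply: eq_bigr => k _; apply: eq_bigl => z /=.
by rewrite -val_eqE /= inordK // ltnS PP_le.
Qed.

Lemma level_pos0 D i : level_pos D 0 i = 0.
Proof.
rewrite /level_pos big1 // => z /eqP z0.
have : (z i <= PP z)%N by rewrite /PP (bigD1 i) ?leq_addr.
by rewrite z0 leqn0 /yreal => /eqP->; rewrite mulr0.
Qed.

Lemma level_negE D k i : level_neg D k i = level_prob D k - level_pos D k i.
Proof. by rewrite /level_neg -sumrB; apply: eq_bigr => z _; rewrite mulrBr mulr1. Qed.

Lemma sum_level_pos D k : \sum_i level_pos D k i = k%:R * level_prob D k.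
Proof.
rewrite exchange_big mulr_sumr; apply: eq_bigr => z /eqP <-.
by rewrite -mulr_sumr mulrC natr_PP.
Qed.

Lemma level_prob_marginals D (c : 'I_n) :
  c.+1%:R^-1 * \sum_i marginals D i c = level_prob D c.+1.
Proof. by under eq_bigr do rewrite mxE; rewrite sum_level_pos mulKf ?pnatr_eq0. Qed.

Lemma level_prob0 D : is_dist D ->
  level_prob D 0 = 1 - \sum_(c < n) c.+1%:R^-1 * \sum_i marginals D i c.
Proof.
case=> _ D1; under eq_bigr do rewrite level_prob_marginals.
by rewrite -D1 sum_by_level big_ord_recl addrK.
Qed.

Lemma pcol1_marginals D k : (k <= n)%N -> pcol1 (marginals D) k = level_pos D k.
Proof.
move=> kn; apply/funext => i; case: k kn => [|k] kn /=; first by rewrite level_pos0.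
by case: insubP => [c _ <- | /negP[]//]; rewrite /= mxE.
Qed.

Lemma rk_marginals D k : is_dist D -> (k <= n)%N -> rk (marginals D) k = level_prob D k.
Proof.
case: k => [|k] Dd kn; first by rewrite level_prob0.
by rewrite /rk pcol1_marginals // sum_level_pos mulKf ?pnatr_eq0.
Qed.

Lemma pcol0_marginals D k : is_dist D -> (k <= n)%N ->
  pcol0 (marginals D) k = level_neg D k.
Proof.
move=> Dd kn; apply/funext => i.
by rewrite /pcol0 rk_marginals // pcol1_marginals // level_negE.
Qed.

Lemma level_pos_bounds D k i : is_dist D -> 0 <= level_pos D k i <= level_prob D k.
Proof.
case=> D0 _; rewrite sumr_ge0 => [|z _]; last by rewrite mulr_ge0 ?ler0n.
by apply: ler_sum => z _; rewrite /yreal; case: (z i); rewrite ?mulr1 ?mulr0.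
Qed.

Lemma marginals_inDelta D : is_dist D -> inDelta (marginals D).
Proof.
move=> Dd; split; [|split] => [i c|i c|].
- by rewrite mxE; case/andP: (level_pos_bounds c.+1 i Dd).
- by rewrite level_prob_marginals mxE; case/andP: (level_pos_bounds c.+1 i Dd).
- by rewrite -subr_ge0 -level_prob0 // sumr_ge0 //; case: Dd.
Qed.

Lemma marginals_onto M : inDelta M -> exists2 D, is_dist D & marginals D = M.
Proof.
case=> M0 [M_le M_sum].
have /fin_all_exists[E E_M] :
    forall c : 'I_n, exists F, level_comb c.+1 F (fun i => M i c).
  by move=> c; apply: column_level_comb.
pose z0 : lab n := [ffun => false].
have PP_z0 : PP z0 = 0%N by rewrite /PP big1 // => i _; rewrite ffunE.
pose r0 := 1 - \sum_(c < n) c.+1%:R^-1 * \sum_i M i c.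
(* Column c is spread over level c+1, the leftover mass r0 sits on the zero vector. *)
pose D z := \sum_c E c z + (z == z0)%:R * r0.
have DE (c : 'I_n) z : PP z = c.+1 -> D z = E c z.
  move=> zc; rewrite /D (bigD1 c) //= big1 => [|c' c'c]; last first.
    by apply: (level_comb_off (E_M c')); rewrite zc eqSS val_eqE eq_sym.
  have [zz0|_] := eqVneq z z0; first by move: zc; rewrite zz0 PP_z0.
  by rewrite mul0r !addr0.
exists D.
  split=> [z|].
    by rewrite addr_ge0 ?mulr_ge0 ?ler0n ?subr_ge0 ?sumr_ge0 // => c _; case: (E_M c).
  rewrite /D big_split /= exchange_big /=.
  have -> : \sum_z (z == z0)%:R * r0 = r0.
    by rewrite (bigD1 z0) //= eqxx mul1r big1 ?addr0 // => z /negbTE->; rewrite mul0r.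
  suff -> : \sum_c \sum_z E c z = \sum_(c < n) c.+1%:R^-1 * \sum_i M i c.
    by rewrite addrC subrK.
  by apply: eq_bigr => c _; rewrite (level_comb_mass (E_M c)) mulKf ?pnatr_eq0.
apply/matrixP => i c; rewrite mxE; have [_ _ <-] := E_M c.
rewrite [RHS](bigID (fun z => PP z == c.+1)) /= [X in _ + X]big1 ?addr0.
  by apply: eq_bigr => z /eqP /DE ->.
by move=> z zc; rewrite (level_comb_off (E_M c) zc) mul0r.
Qed.

Lemma row_sum_marginals D i : \sum_c marginals D i c = \sum_z D z * yreal R z i.
Proof.
under eq_bigr do rewrite mxE.
by rewrite sum_by_level big_ord_recl /= [X in X + _]level_pos0 add0r.
Qed.

Lemma dotvC (u v : 'I_n -> R) : dotv u v = dotv v u.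
Proof. by apply: eq_bigr => i _; rewrite mulrC. Qed.

Lemma dotv_suml (S : pred (lab n)) (c : lab n -> R) (u : lab n -> 'I_n -> R) v :
  dotv (fun i => \sum_(z | S z) c z * u z i) v = \sum_(z | S z) c z * dotv (u z) v.
Proof.
rewrite /dotv; under eq_bigr do rewrite mulr_suml.
rewrite exchange_big; apply: eq_bigr => z _; rewrite mulr_sumr.
by apply: eq_bigr => i _; rewrite mulrA.
Qed.

Lemma dotv_sumr (S : pred (lab n)) (c : lab n -> R) u (v : lab n -> 'I_n -> R) :
  dotv u (fun i => \sum_(z | S z) c z * v z i) = \sum_(z | S z) c z * dotv u (v z).
Proof. by rewrite dotvC dotv_suml; under eq_bigr do rewrite dotvC. Qed.

Lemma natr_TP yh yc : (TP yh yc)%:R = dotv (yreal R yh) (yreal R yc).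
Proof. by rewrite /TP natr_sum; apply: eq_bigr => i _; rewrite -mulnb natrM. Qed.

Lemma natr_TN yh yc :
  (TN yh yc)%:R = dotv (fun i => 1 - yreal R yh i) (fun i => 1 - yreal R yc i).
Proof.
rewrite /TN natr_sum; apply: eq_bigr => i _; rewrite /yreal.
by case: (yh i); case: (yc i); rewrite /= ?subrr ?subr0 ?mulr0 ?mul0r ?mulr1.
Qed.

Lemma sum_weighted_affine (S : pred (lab n)) (c X Y : lab n -> R) (g a b f : R) :
  \sum_(z | S z) c z * (g * (a * X z + b * Y z + f)) =
  g * (a * \sum_(z | S z) c z * X z + b * \sum_(z | S z) c z * Y z
       + f * \sum_(z | S z) c z).
Proof. by rewrite !mulr_sumr -!big_split mulr_sumr; apply: eq_bigr => z _ /=; ring. Qed.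

Lemma level_expected_metric (M : fmetric R) P k yc :
  \sum_(yh | PP yh == k) P yh * metric_val M yh yc =
  \sum_(j < mJ M) (mg j k (PP yc))^-1 *
    (ma j * dotv (level_pos P k) (yreal R yc)
     + mb j * dotv (level_neg P k) (fun i => 1 - yreal R yc i)
     + mf j k (PP yc) * level_prob P k).
Proof.
transitivity (\sum_(j < mJ M) \sum_(yh | PP yh == k) P yh * ((mg j k (PP yc))^-1 *
    (ma j * dotv (yreal R yh) (yreal R yc)
     + mb j * dotv (fun i => 1 - yreal R yh i) (fun i => 1 - yreal R yc i)
     + mf j k (PP yc)))).
  rewrite exchange_big; apply: eq_bigr => yh /eqP yhk.
  rewrite /metric_val mulr_sumr; apply: eq_bigr => j _.
  by rewrite natr_TP natr_TN yhk -[AP yc]/(PP yc); ring.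
apply: eq_bigr => j _; rewrite sum_weighted_affine.
by rewrite [dotv (level_pos _ _) _]dotv_suml [dotv (level_neg _ _) _]dotv_suml.
Qed.

Lemma level_expected_metric_pair (M : fmetric R) P Q k l :
  \sum_(yh | PP yh == k) \sum_(yc | PP yc == l) P yh * Q yc * metric_val M yh yc =
  \sum_(j < mJ M) (mg j k l)^-1 *
    (ma j * dotv (level_pos P k) (level_pos Q l)
     + mb j * dotv (level_neg P k) (level_neg Q l)
     + mf j k l * level_prob P k * level_prob Q l).
Proof.
rewrite exchange_big.
under eq_bigr => yc /eqP ycl.
  under eq_bigr do rewrite mulrAC.
  rewrite -mulr_suml level_expected_metric ycl mulrC mulr_sumr.
  over.
rewrite exchange_big; apply: eq_bigr => j _; rewrite sum_weighted_affine.
by rewrite [dotv _ (level_pos _ _)]dotv_sumr [dotv _ (level_neg _ _)]dotv_sumr.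
Qed.

Lemma expected_metricE (M : fmetric R) P Q : is_dist P -> is_dist Q ->
  \sum_yh \sum_yc P yh * Q yc * metric_val M yh yc =
  \sum_(k < n.+1) \sum_(l < n.+1) \sum_(j < mJ M) (mg j k l)^-1 *
    (ma j * dotv (pcol1 (marginals P) k) (pcol1 (marginals Q) l)
     + mb j * dotv (pcol0 (marginals P) k) (pcol0 (marginals Q) l)
     + mf j k l * rk (marginals P) k * rk (marginals Q) l).
Proof.
move=> Pd Qd; rewrite sum_by_level; apply: eq_bigr => k _.
under eq_bigr do rewrite sum_by_level.
rewrite exchange_big; apply: eq_bigr => l _.
have kn : (k <= n)%N := ltn_ord k.
have ln : (l <= n)%N := ltn_ord l.
rewrite (pcol1_marginals P kn) (pcol1_marginals Q ln) (pcol0_marginals Pd kn).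
rewrite (pcol0_marginals Qd ln) (rk_marginals Pd kn) (rk_marginals Qd ln).
exact: level_expected_metric_pair.
Qed.

Lemma exp_metricE (M : fmetric R) P y : is_dist P ->
  exp_metric M P y = \sum_(k < n.+1) \sum_(j < mJ M) (mg j k (lstar y))^-1 *
    (ma j * dotv (pcol1 (marginals P) k) (yreal R y)
     + mb j * dotv (pcol0 (marginals P) k) (fun i => 1 - yreal R y i)
     + mf j k (lstar y) * rk (marginals P) k).
Proof.
move=> Pd; rewrite /exp_metric sum_by_level; apply: eq_bigr => k _.
have kn : (k <= n)%N := ltn_ord k.
rewrite (pcol1_marginals P kn) (pcol0_marginals Pd kn) (rk_marginals Pd kn).
rewrite -[lstar y]/(PP y).
exact: level_expected_metric.
Qed.

Lemma feature_gapE m (Psi : 'M[R]_(m, n)) (theta : 'cV[R]_m) yc y :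
  (theta^T *m (Psi *m (yvec R yc - yvec R y))) 0 0 =
  dotv (yreal R yc) (fun i => (Psi^T *m theta) i 0)
  - dotv (yreal R y) (fun i => (Psi^T *m theta) i 0).
Proof.
rewrite mulmxA -[theta^T *m Psi]trmxK trmx_mul trmxK [LHS]mxE -sumrB.
by apply: eq_bigr => i _; rewrite !mxE /yreal mulrBr; congr (_ - _); apply: mulrC.
Qed.

Lemma expectation_prod_affine (F : lab n -> lab n -> R) (G : lab n -> R) (c : R) P Q :
  is_dist P -> is_dist Q ->
  \sum_yh \sum_yc P yh * Q yc * (F yh yc - (G yc - c)) =
  \sum_yh \sum_yc P yh * Q yc * F yh yc - \sum_yc Q yc * G yc + c.
Proof.
case=> _ P1 [_ Q1].
have marginalQ H : \sum_yh \sum_yc P yh * Q yc * H yc = \sum_yc Q yc * H yc.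
  rewrite exchange_big; apply: eq_bigr => yc _.
  by rewrite -!mulr_suml P1 mul1r.
rewrite -[in RHS](marginalQ G) -[c in RHS]mul1r -Q1 mulr_suml -(marginalQ (fun=> c)).
rewrite -sumrB -big_split; apply: eq_bigr => yh _.
by rewrite -sumrB -big_split; apply: eq_bigr => yc _ /=; ring.
Qed.

Lemma game_objE m (Psi : 'M[R]_(m, n)) theta y (M : fmetric R) P Q :
  is_dist P -> is_dist Q ->
  game_obj Psi theta y M P Q =
  marg_obj Psi theta M (marginals P) (marginals Q) + lin_y Psi theta y.
Proof.
move=> Pd Qd; rewrite /game_obj.
under eq_bigr do under eq_bigr do rewrite feature_gapE.
rewrite expectation_prod_affine // expected_metricE // /marg_obj /lin_y.
have -> : (fun i => \sum_c marginals Q i c) = (fun i => \sum_yc Q yc * yreal R yc i).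
  by apply/funext => i; apply: row_sum_marginals.
by rewrite dotv_suml.
Qed.
End Marginals.

Section MarginalImages.
Variables (R : realType) (n : nat).

Lemma image_marginals :
  @marginals R n @` [set D : lab n -> R | is_dist D] = [set M | inDelta M].
Proof.
apply/seteqP; split=> [_ [D Dd <-]|M /marginals_onto[D Dd <-]]; last by exists D.
exact: marginals_inDelta.
Qed.

Lemma image_marginals_feasible t (Mc : 'I_t -> fmetric R) tau (y : lab n) :
  @marginals R n @` [set P | is_dist P /\ forall i, tau i <= exp_metric (Mc i) P y] =
  [set M | inDelta M /\ inGamma Mc tau y M].
Proof.
apply/seteqP; split=> [_ [P [Pd Pc] <-]|M [/marginals_onto[P Pd <-] MG]].
  by split=> [|i]; [exact: marginals_inDelta | rewrite -exp_metricE].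
by exists P => //; split=> // i; rewrite exp_metricE //; apply: MG.
Qed.
End MarginalImages.

Theorem theorem5 (R : realType) (n m t : nat) (y : lab n) (Psi : 'M[R]_(m, n))
    (tau : 'I_t -> R) (M0 : fmetric R) (Mc : 'I_t -> fmetric R) :
  (0 < n)%N -> (0 < m)%N -> (0 < t)%N ->
  g_nonzero n M0 -> (forall i, g_nonzero n (Mc i)) ->
  ereal_sup [set ereal_inf [set ereal_sup
      [set (game_obj Psi theta y M0 P Q)%:E
       | P in [set P | is_dist P /\ forall i, tau i <= exp_metric (Mc i) P y]]
     | Q in [set Q | is_dist Q]]
   | theta in [set: 'cV[R]_m]]
  =
  ereal_sup [set (ereal_inf [set ereal_sup
      [set (marg_obj Psi theta M0 P Q)%:E
       | P in [set P | inDelta P /\ inGamma Mc tau y P]]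
     | Q in [set Q | inDelta Q]] + (lin_y Psi theta y)%:E)%E
   | theta in [set: 'cV[R]_m]].
Proof.
(* The identity holds for any [g] and any dimensions. *)
move=> _ _ _ _ _.
congr ereal_sup; apply: eq_imagel => theta _.
rewrite -ereal_infDr -image_marginals !image_comp; congr ereal_inf.
apply: eq_imagel => Q Qd /=.
rewrite -ereal_supDr -(image_marginals_feasible Mc tau y) !image_comp; congr ereal_sup.
by apply: eq_imagel => P [Pd _] /=; rewrite game_objE // EFinD.
Qed.
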